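(* Let $\mathcal C$ be a locally additive 2-category which is idempotent-complete (in the 2-categorical sense) and let $x\in\mathcal C$ be an object. If the ring of 2-endomorphisms of $\mathrm{id}_x$ admits a finite decomposition $\mathrm{End}(\mathrm{id}_x)=\bigoplus_{i\in I}A_i$ (as a direct sum of rings), then $x$ admits a direct sum decomposition $x\simeq\boxplus_{i\in I}x_i$ with $\mathrm{End}(\mathrm{id}_{x_i})\cong A_i$.
   Context: A 2-category (bicategory) is locally additive if its Hom-categories are additive. It is idempotent-complete if its Hom-categories are idempotent complete and every 2-categorical idempotent splits, where a 2-categorical idempotent is $(c,e,\mu,\delta)$ with $e\colon c\to c$, $\mu\colon e\circ e\Rightarrow e$ non-unital associative, $\delta\colon e\Rightarrow e\circ e$ coassociative and an $e$-bimodule map with $\mu\delta=\mathrm{id}_e$, and a splitting is an object $d$ with $f\colon c\to d$, $g\colon d\to c$, $\phi\colon f\circ g\Rightarrow\mathrm{id}_d$, $\gamma\colon\mathrm{id}_d\Rightarrow f\circ g$, $\phi\gamma=\mathrm{id}$, and $g\circ f\cong e$ compatibly with $\mu,\delta$. A direct sum of finitely many objects $x_i$ is an object $\boxplus_ix_i$ with 1-morphisms $\iota_j\colon x_j\to\boxplus_ix_i$, $\rho_j\colon\boxplus_ix_i\to x_j$ such that $\rho_j\circ\iota_j\cong\mathrm{id}_{x_j}$, $\rho_j\circ\iota_k\cong0$ for $j\ne k$, and $\mathrm{id}_{\boxplus_ix_i}\cong\bigoplus_i\iota_i\circ\rho_i$. *)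

From HB Require Import structures.
From mathcomp Require Import all_boot all_order all_algebra.
Set Implicit Arguments. Unset Strict Implicit. Unset Printing Implicit Defensive.
Import GRing.Theory.
Local Open Scope ring_scope.

Record bicat := Bicat {
  ob : Type;
  hom : ob -> ob -> Type;
  cell : forall x y : ob, hom x y -> hom x y -> zmodType;
  id1 : forall x, hom x x;
  comp1 : forall x y z, hom y z -> hom x y -> hom x z;
  id2 : forall x y (f : hom x y), cell f f;
  vcomp : forall x y (f g h : hom x y), cell g h -> cell f g -> cell f h;
  hcomp : forall x y z (f f' : hom y z) (g g' : hom x y),
      cell f f' -> cell g g' -> cell (comp1 f g) (comp1 f' g');
  assoc : forall w x y z (h : hom y z) (g : hom x y) (f : hom w x),
      cell (comp1 (comp1 h g) f) (comp1 h (comp1 g f));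
  assoc_inv : forall w x y z (h : hom y z) (g : hom x y) (f : hom w x),
      cell (comp1 h (comp1 g f)) (comp1 (comp1 h g) f);
  lunit : forall x y (f : hom x y), cell (comp1 (id1 y) f) f;
  lunit_inv : forall x y (f : hom x y), cell f (comp1 (id1 y) f);
  runit : forall x y (f : hom x y), cell (comp1 f (id1 x)) f;
  runit_inv : forall x y (f : hom x y), cell f (comp1 f (id1 x))
}.

Arguments hom {_} x y.
Arguments cell {_ x y} f g.
Arguments id1 {_} x.
Arguments comp1 {_ x y z} g f.
Arguments id2 {_ x y} f.
Arguments vcomp {_ x y f g h} b a.
Arguments hcomp {_ x y z f f' g g'} b a.
Arguments assoc {_ w x y z} h g f.
Arguments assoc_inv {_ w x y z} h g f.
Arguments lunit {_ x y} f.
Arguments lunit_inv {_ x y} f.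
Arguments runit {_ x y} f.
Arguments runit_inv {_ x y} f.

Section Defs.
Variable C : bicat.

Definition bicat_axioms : Prop :=
  [/\ (forall (x y : ob C) (f g h k : hom x y) (c : cell h k) (b : cell g h) (a : cell f g),
         vcomp c (vcomp b a) = vcomp (vcomp c b) a),
      (forall (x y : ob C) (f g : hom x y) (a : cell f g), vcomp (id2 g) a = a /\ vcomp a (id2 f) = a),
      (forall (x y z : ob C) (f : hom y z) (g : hom x y), hcomp (id2 f) (id2 g) = id2 (comp1 f g)),
      (forall (x y z : ob C) (f f' f'' : hom y z) (g g' g'' : hom x y)
              (b : cell f f') (b' : cell f' f'') (a : cell g g') (a' : cell g' g''),
         hcomp (vcomp b' b) (vcomp a' a) = vcomp (hcomp b' a') (hcomp b a)) &
   [/\ (forall (w x y z : ob C) (h h' : hom y z) (g g' : hom x y) (f f' : hom w x)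
              (c : cell h h') (b : cell g g') (a : cell f f'),
         vcomp (assoc h' g' f') (hcomp (hcomp c b) a)
         = vcomp (hcomp c (hcomp b a)) (assoc h g f)),
      (forall (w x y z : ob C) (h : hom y z) (g : hom x y) (f : hom w x),
         vcomp (assoc_inv h g f) (assoc h g f) = id2 _ /\
         vcomp (assoc h g f) (assoc_inv h g f) = id2 _),
      (forall (x y : ob C) (f f' : hom x y) (a : cell f f'),
         vcomp (lunit f') (hcomp (id2 (id1 y)) a) = vcomp a (lunit f) /\
         vcomp (runit f') (hcomp a (id2 (id1 x))) = vcomp a (runit f)),
      (forall (x y : ob C) (f : hom x y),
         [/\ vcomp (lunit_inv f) (lunit f) = id2 _, vcomp (lunit f) (lunit_inv f) = id2 _,
             vcomp (runit_inv f) (runit f) = id2 _ & vcomp (runit f) (runit_inv f) = id2 _]) &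
      ((forall (v w x y z : ob C) (k : hom y z) (h : hom x y) (g : hom w x) (f : hom v w),
         vcomp (assoc k h (comp1 g f)) (assoc (comp1 k h) g f)
         = vcomp (hcomp (id2 k) (assoc h g f))
                 (vcomp (assoc k (comp1 h g) f) (hcomp (assoc k h g) (id2 f)))) /\
      (forall (x y z : ob C) (f : hom x y) (g : hom y z),
         vcomp (hcomp (id2 g) (lunit f)) (assoc g (id1 y) f)
         = hcomp (runit g) (id2 f)))]].

Definition is_zero1 (x y : ob C) (z : hom x y) : Prop := id2 z = 0.

Definition iso2 (x y : ob C) (f g : hom x y) : Prop :=
  exists (a : cell f g) (b : cell g f), vcomp b a = id2 f /\ vcomp a b = id2 g.

Definition locally_additive : Prop :=
  [/\ (forall (x y : ob C) (f g h : hom x y) (b : cell g h) (a1 a2 : cell f g),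
         vcomp b (a1 + a2) = vcomp b a1 + vcomp b a2),
      (forall (x y : ob C) (f g h : hom x y) (b1 b2 : cell g h) (a : cell f g),
         vcomp (b1 + b2) a = vcomp b1 a + vcomp b2 a),
      (forall (x y z : ob C) (f f' : hom y z) (g g' : hom x y) (b : cell f f') (a1 a2 : cell g g'),
         hcomp b (a1 + a2) = hcomp b a1 + hcomp b a2),
      (forall (x y z : ob C) (f f' : hom y z) (g g' : hom x y) (b1 b2 : cell f f') (a : cell g g'),
         hcomp (b1 + b2) a = hcomp b1 a + hcomp b2 a) &
      ((forall (x y : ob C), exists z : hom x y, is_zero1 z) /\
      (forall (x y : ob C) (f g : hom x y), exists (s : hom x y) (i1 : cell f s) (i2 : cell g s)
            (p1 : cell s f) (p2 : cell s g),
         [/\ vcomp p1 i1 = id2 f, vcomp p2 i2 = id2 g, vcomp p1 i2 = 0, vcomp p2 i1 = 0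
           & vcomp i1 p1 + vcomp i2 p2 = id2 s]))].

Definition idem2 (c : ob C) (e : hom c c) (mu : cell (comp1 e e) e) (de : cell e (comp1 e e)) : Prop :=
  [/\ vcomp mu (hcomp mu (id2 e)) = vcomp mu (vcomp (hcomp (id2 e) mu) (assoc e e e)),
      vcomp (assoc e e e) (vcomp (hcomp de (id2 e)) de) = vcomp (hcomp (id2 e) de) de,
      vcomp de mu = vcomp (hcomp mu (id2 e)) (vcomp (assoc_inv e e e) (hcomp (id2 e) de)),
      vcomp de mu = vcomp (hcomp (id2 e) mu) (vcomp (assoc e e e) (hcomp de (id2 e))) &
      vcomp mu de = id2 e].

Definition splits (c : ob C) (e : hom c c) (mu : cell (comp1 e e) e) (de : cell e (comp1 e e)) : Prop :=
  exists (d : ob C) (f : hom c d) (g : hom d c)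
         (phi : cell (comp1 f g) (id1 d)) (ga : cell (id1 d) (comp1 f g))
         (th : cell (comp1 g f) e) (thi : cell e (comp1 g f)),
    let mu' : cell (comp1 (comp1 g f) (comp1 g f)) (comp1 g f) :=
      vcomp (hcomp (id2 g) (lunit f))
       (vcomp (hcomp (id2 g) (hcomp phi (id2 f)))
        (vcomp (hcomp (id2 g) (assoc_inv f g f)) (assoc g f (comp1 g f)))) in
    let de' : cell (comp1 g f) (comp1 (comp1 g f) (comp1 g f)) :=
      vcomp (assoc_inv g f (comp1 g f))
       (vcomp (hcomp (id2 g) (assoc f g f))
        (vcomp (hcomp (id2 g) (hcomp ga (id2 f))) (hcomp (id2 g) (lunit_inv f)))) in
    [/\ vcomp phi ga = id2 (id1 d),
        vcomp thi th = id2 _, vcomp th thi = id2 e,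
        vcomp th mu' = vcomp mu (hcomp th th) &
        vcomp de th = vcomp (hcomp th th) de'].

Definition idem_complete : Prop :=
  (forall (x y : ob C) (f : hom x y) (p : cell f f), vcomp p p = p ->
     exists (g : hom x y) (r : cell f g) (s : cell g f),
       vcomp r s = id2 g /\ vcomp s r = p) /\
  (forall (c : ob C) (e : hom c c) (mu : cell (comp1 e e) e) (de : cell e (comp1 e e)),
     idem2 mu de -> splits mu de).

Definition is_biproduct (I : finType) (x y : ob C) (F : I -> hom x y) (s : hom x y) : Prop :=
  exists (inj : forall i, cell (F i) s) (pr : forall i, cell s (F i)),
    [/\ forall i, vcomp (pr i) (inj i) = id2 (F i),
        forall i j, i != j -> vcomp (pr i) (inj j) = 0 &
        \sum_(i : I) vcomp (inj i) (pr i) = id2 s].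

Definition is_direct_sum (I : finType) (xs : I -> ob C) (X : ob C) : Prop :=
  exists (io : forall i, hom (xs i) X) (rh : forall i, hom X (xs i)),
    [/\ forall j, iso2 (comp1 (rh j) (io j)) (id1 (xs j)),
        forall j k, j != k -> exists z, is_zero1 z /\ iso2 (comp1 (rh j) (io k)) z &
        exists s, is_biproduct (fun i => comp1 (io i) (rh i)) s /\ iso2 (id1 X) s].

Definition equiv_ob (x y : ob C) : Prop :=
  exists (u : hom x y) (v : hom y x), iso2 (comp1 v u) (id1 x) /\ iso2 (comp1 u v) (id1 y).

(* The ring End(id_x) (multiplication = vertical composition). *)
Definition End2 (x : ob C) : zmodType := cell (id1 x) (id1 x).

(* End(id_x) = \bigoplus_i A_i as a direct sum of rings (A_i two-sided ideals,
   internal direct sum decomposition). *)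
Definition ring_decomp (x : ob C) (I : finType) (A : I -> End2 x -> Prop) : Prop :=
  [/\ forall i, A i 0,
      forall i a b, A i a -> A i b -> A i (a - b),
      forall i r a, A i a -> A i (vcomp r a) /\ A i (vcomp a r),
      forall r : End2 x, exists a : I -> End2 x, (forall i, A i (a i)) /\ r = \sum_(i : I) a i &
      forall a b : I -> End2 x, (forall i, A i (a i)) -> (forall i, A i (b i)) ->
        \sum_(i : I) a i = \sum_(i : I) b i -> forall i, a i = b i].

Definition ring_iso_onto (y x : ob C) (phi : End2 y -> End2 x) (A : End2 x -> Prop) : Prop :=
  [/\ forall a b, phi (a + b) = phi a + phi b,
      forall a b, phi (vcomp a b) = vcomp (phi a) (phi b),
      injective phi,
      forall a, A (phi a) &
      forall b, A b -> exists a, phi a = b].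

End Defs.

From Pilot Require Import Defs.
From mathcomp Require Import all_boot all_order all_algebra.
Set Implicit Arguments. Unset Strict Implicit. Unset Printing Implicit Defensive.
Local Notation hom := Defs.hom.
Import GRing.Theory.
Local Open Scope ring_scope.

(* Write 1 = \sum_i e_i with e_i the unit of A_i: the e_i are orthogonal idempotents
   of End(id_x).  Split each e_i in Hom(x, x) as id_x -r-> E_i -s-> id_x.  Through the
   unitor id_x o id_x ~ id_x, E_i is a 2-categorical idempotent with
   mu = r lambda (s (x) s) and delta = (r (x) r) lambda^-1 s, so it splits as
   g_i o f_i ~ E_i with f_i o g_i a retract of id_{x_i}; as delta mu = 1 here too,
   f_i o g_i ~ id_{x_i}.  Orthogonality of the e_i makes f_j o g_k zero for j <> k,
   and id_x is the biproduct of the g_i o f_i, so x is the direct sum of the x_i,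
   with inclusions g_i and projections f_i.  Finally a |-> s th (g (x) a.f) th^-1 r
   identifies End(id_{x_i}) with e_i End(id_x) e_i = A_i. *)

Notation "b • a" := (vcomp b a) (at level 40, left associativity).
Notation "b ⊗ a" := (hcomp b a) (at level 38, left associativity).
Notation "1_ f" := (id2 f) (at level 2).

Section Bicategory.
Variable C : bicat.
Hypothesis HC : bicat_axioms C.

Lemma vcompA (x y : ob C) (f g h k : hom x y) (c : cell h k) (b : cell g h) (a : cell f g) :
  c • (b • a) = c • b • a.
Proof. by case: HC => [H _ _ _ _]; apply: H. Qed.

Lemma vcomp1l (x y : ob C) (f g : hom x y) (a : cell f g) : 1_g • a = a.
Proof. by case: HC => [_ H _ _ _]; case: (H _ _ _ _ a). Qed.

Lemma vcomp1r (x y : ob C) (f g : hom x y) (a : cell f g) : a • 1_f = a.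
Proof. by case: HC => [_ H _ _ _]; case: (H _ _ _ _ a). Qed.

Lemma hcomp11 (x y z : ob C) (f : hom y z) (g : hom x y) : 1_f ⊗ 1_g = 1_(comp1 f g).
Proof. by case: HC => [_ _ H _ _]; apply: H. Qed.

Lemma interchange (x y z : ob C) (f f' f'' : hom y z) (g g' g'' : hom x y)
   (b : cell f f') (b' : cell f' f'') (a : cell g g') (a' : cell g' g'') :
  (b' • b) ⊗ (a' • a) = (b' ⊗ a') • (b ⊗ a).
Proof. by case: HC => [_ _ _ H _]; apply: H. Qed.

Lemma assoc_nat (w x y z : ob C) (h h' : hom y z) (g g' : hom x y) (f f' : hom w x)
   (c : cell h h') (b : cell g g') (a : cell f f') :
  assoc h' g' f' • (c ⊗ b ⊗ a) = (c ⊗ (b ⊗ a)) • assoc h g f.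
Proof. by case: HC => [_ _ _ _ [H _ _ _ _]]; apply: H. Qed.

Lemma assoc_inv_assoc (w x y z : ob C) (h : hom y z) (g : hom x y) (f : hom w x) :
  assoc_inv h g f • assoc h g f = 1_ _.
Proof. by case: HC => [_ _ _ _ [_ H _ _ _]]; case: (H _ _ _ _ h g f). Qed.

Lemma assoc_assoc_inv (w x y z : ob C) (h : hom y z) (g : hom x y) (f : hom w x) :
  assoc h g f • assoc_inv h g f = 1_ _.
Proof. by case: HC => [_ _ _ _ [_ H _ _ _]]; case: (H _ _ _ _ h g f). Qed.

Lemma lunit_nat (x y : ob C) (f f' : hom x y) (a : cell f f') :
  lunit f' • (1_(id1 y) ⊗ a) = a • lunit f.
Proof. by case: HC => [_ _ _ _ [_ _ H _ _]]; case: (H _ _ _ _ a). Qed.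

Lemma runit_nat (x y : ob C) (f f' : hom x y) (a : cell f f') :
  runit f' • (a ⊗ 1_(id1 x)) = a • runit f.
Proof. by case: HC => [_ _ _ _ [_ _ H _ _]]; case: (H _ _ _ _ a). Qed.

Lemma lunit_inv_lunit (x y : ob C) (f : hom x y) : lunit_inv f • lunit f = 1_ _.
Proof. by case: HC => [_ _ _ _ [_ _ _ H _]]; case: (H _ _ f). Qed.

Lemma lunit_lunit_inv (x y : ob C) (f : hom x y) : lunit f • lunit_inv f = 1_ _.
Proof. by case: HC => [_ _ _ _ [_ _ _ H _]]; case: (H _ _ f). Qed.

Lemma runit_inv_runit (x y : ob C) (f : hom x y) : runit_inv f • runit f = 1_ _.
Proof. by case: HC => [_ _ _ _ [_ _ _ H _]]; case: (H _ _ f). Qed.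

Lemma runit_runit_inv (x y : ob C) (f : hom x y) : runit f • runit_inv f = 1_ _.
Proof. by case: HC => [_ _ _ _ [_ _ _ H _]]; case: (H _ _ f). Qed.

Lemma pentagon (v w x y z : ob C) (k : hom y z) (h : hom x y) (g : hom w x) (f : hom v w) :
  assoc k h (comp1 g f) • assoc (comp1 k h) g f
  = (1_k ⊗ assoc h g f) • (assoc k (comp1 h g) f • (assoc k h g ⊗ 1_f)).
Proof. by case: HC => [_ _ _ _ [_ _ _ _ [H _]]]; apply: H. Qed.

Lemma triangle (x y z : ob C) (f : hom x y) (g : hom y z) :
  (1_g ⊗ lunit f) • assoc g (id1 y) f = runit g ⊗ 1_f.
Proof. by case: HC => [_ _ _ _ [_ _ _ _ [_ H]]]; apply: H. Qed.

Hypothesis Hadd : locally_additive C.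

Lemma vcompDr (x y : ob C) (f g h : hom x y) (b : cell g h) (a1 a2 : cell f g) :
  b • (a1 + a2) = b • a1 + b • a2.
Proof. by case: Hadd => H _ _ _ _; apply: H. Qed.

Lemma vcompDl (x y : ob C) (f g h : hom x y) (b1 b2 : cell g h) (a : cell f g) :
  (b1 + b2) • a = b1 • a + b2 • a.
Proof. by case: Hadd => _ H _ _ _; apply: H. Qed.

Lemma hcompDr (x y z : ob C) (f f' : hom y z) (g g' : hom x y) (b : cell f f')
  (a1 a2 : cell g g') :
  b ⊗ (a1 + a2) = b ⊗ a1 + b ⊗ a2.
Proof. by case: Hadd => _ _ H _ _; apply: H. Qed.

Lemma hcompDl (x y z : ob C) (f f' : hom y z) (g g' : hom x y) (b1 b2 : cell f f')
  (a : cell g g') :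
  (b1 + b2) ⊗ a = b1 ⊗ a + b2 ⊗ a.
Proof. by case: Hadd => _ _ _ H _; apply: H. Qed.

Lemma vcomp0r (x y : ob C) (f g h : hom x y) (b : cell g h) : b • (0 : cell f g) = 0.
Proof. by apply: (addrI (b • 0)); rewrite -vcompDr !addr0. Qed.

Lemma vcomp0l (x y : ob C) (f g h : hom x y) (a : cell f g) : (0 : cell g h) • a = 0.
Proof. by apply: (addrI (0 • a)); rewrite -vcompDl !addr0. Qed.

Lemma hcomp0r (x y z : ob C) (f f' : hom y z) (g g' : hom x y) (b : cell f f') :
  b ⊗ (0 : cell g g') = 0.
Proof. by apply: (addrI (b ⊗ 0)); rewrite -hcompDr !addr0. Qed.

Lemma hcomp0l (x y z : ob C) (f f' : hom y z) (g g' : hom x y) (a : cell g g') :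
  (0 : cell f f') ⊗ a = 0.
Proof. by apply: (addrI (0 ⊗ a)); rewrite -hcompDl !addr0. Qed.

Lemma whiskerlM (x y z : ob C) (f : hom y z) (g g' g'' : hom x y)
  (a : cell g g') (a' : cell g' g'') :
  (1_f ⊗ a') • (1_f ⊗ a) = 1_f ⊗ (a' • a).
Proof. by rewrite -interchange vcomp1l. Qed.

Lemma whiskerrM (x y z : ob C) (f f' f'' : hom y z) (g : hom x y)
  (b : cell f f') (b' : cell f' f'') :
  (b' ⊗ 1_g) • (b ⊗ 1_g) = (b' • b) ⊗ 1_g.
Proof. by rewrite -interchange vcomp1l. Qed.

Lemma whiskerlMA (x y z : ob C) (f : hom y z) (g g' g'' : hom x y) (h : hom x z)
  (a : cell g g') (a' : cell g' g'') (c : cell h (comp1 f g)) :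
  (1_f ⊗ a') • ((1_f ⊗ a) • c) = (1_f ⊗ (a' • a)) • c.
Proof. by rewrite vcompA whiskerlM. Qed.

Lemma whiskerrMA (x y z : ob C) (f f' f'' : hom y z) (g : hom x y) (h : hom x z)
  (b : cell f f') (b' : cell f' f'') (c : cell h (comp1 f g)) :
  (b' ⊗ 1_g) • ((b ⊗ 1_g) • c) = ((b' • b) ⊗ 1_g) • c.
Proof. by rewrite vcompA whiskerrM. Qed.

Lemma hcompEl (x y z : ob C) (f f' : hom y z) (g g' : hom x y) (b : cell f f') (a : cell g g') :
  b ⊗ a = (b ⊗ 1_g') • (1_f ⊗ a).
Proof. by rewrite -interchange vcomp1l vcomp1r. Qed.

Lemma hcompEr (x y z : ob C) (f f' : hom y z) (g g' : hom x y) (b : cell f f') (a : cell g g') :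
  b ⊗ a = (1_f' ⊗ a) • (b ⊗ 1_g).
Proof. by rewrite -interchange vcomp1l vcomp1r. Qed.

Lemma retract_conj_inj (x y : ob C) (f g : hom x y) (i : cell f g) (j : cell g f)
  (a b : cell f f) :
  j • i = 1_f -> i • a • j = i • b • j -> a = b.
Proof.
move=> ji H.
have E c : c = j • (i • c • j) • i by rewrite !vcompA ji vcomp1l -vcompA ji vcomp1r.
by rewrite (E a) H -E.
Qed.

Lemma assoc_inv_nat (w x y z : ob C) (h h' : hom y z) (g g' : hom x y) (f f' : hom w x)
   (c : cell h h') (b : cell g g') (a : cell f f') :
  assoc_inv h' g' f' • (c ⊗ (b ⊗ a)) = (c ⊗ b ⊗ a) • assoc_inv h g f.
Proof.
rewrite -[LHS]vcomp1r -(assoc_assoc_inv h g f) vcompA -[_ • _ • assoc h g f]vcompA.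
by rewrite -assoc_nat vcompA assoc_inv_assoc vcomp1l.
Qed.

Lemma lunit_inv_nat (x y : ob C) (f f' : hom x y) (a : cell f f') :
  lunit_inv f' • a = (1_(id1 y) ⊗ a) • lunit_inv f.
Proof.
rewrite -[LHS]vcomp1r -(lunit_lunit_inv f) vcompA -[_ • _ • lunit f]vcompA.
by rewrite -lunit_nat vcompA lunit_inv_lunit vcomp1l.
Qed.

Lemma triangle_inv (x y z : ob C) (f : hom x y) (g : hom y z) :
  (runit g ⊗ 1_f) • assoc_inv g (id1 y) f = 1_g ⊗ lunit f.
Proof. by rewrite -triangle -vcompA assoc_assoc_inv vcomp1r. Qed.

Lemma whisker_id1l_inj (x y : ob C) (f g : hom x y) (u v : cell f g) :
  1_(id1 y) ⊗ u = 1_(id1 y) ⊗ v -> u = v.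
Proof.
move=> H.
have E w : w = lunit g • (1_(id1 y) ⊗ w) • lunit_inv f.
  by rewrite lunit_nat -vcompA lunit_lunit_inv vcomp1r.
by rewrite (E u) H -E.
Qed.

Lemma whisker_id1r_inj (x y : ob C) (f g : hom x y) (u v : cell f g) :
  u ⊗ 1_(id1 x) = v ⊗ 1_(id1 x) -> u = v.
Proof.
move=> H.
have E w : w = runit g • (w ⊗ 1_(id1 x)) • runit_inv f.
  by rewrite runit_nat -vcompA runit_runit_inv vcomp1r.
by rewrite (E u) H -E.
Qed.

(* Kelly's lemma: whiskering by id reduces it to the pentagon and two triangles. *)
Lemma lunit_comp1_assoc (x y z : ob C) (g : hom y z) (f : hom x y) :
  lunit (comp1 g f) • assoc (id1 z) g f = lunit g ⊗ 1_f.
Proof.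
apply: whisker_id1l_inj.
set P := assoc (id1 z) (comp1 (id1 z) g) f • (assoc (id1 z) (id1 z) g ⊗ 1_f).
set Q := (assoc_inv (id1 z) (id1 z) g ⊗ 1_f) • assoc_inv (id1 z) (comp1 (id1 z) g) f.
have PQ : P • Q = 1_ _.
  rewrite /P /Q -!vcompA (vcompA (_ ⊗ 1_f)) whiskerrM assoc_assoc_inv hcomp11.
  by rewrite vcomp1l assoc_assoc_inv.
suff H : (1_(id1 z) ⊗ (lunit (comp1 g f) • assoc (id1 z) g f)) • P
       = (1_(id1 z) ⊗ (lunit g ⊗ 1_f)) • P.
  by rewrite -[LHS]vcomp1r -PQ vcompA H -vcompA PQ vcomp1r.
rewrite -whiskerlM -vcompA -pentagon vcompA triangle -{1}(hcomp11 g f) -assoc_nat.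
by rewrite -{1}(triangle g (id1 z)) -{1}(vcomp1l (1_f)) interchange vcompA assoc_nat /P !vcompA.
Qed.

Lemma whisker_lunit (x y : ob C) (f : hom x y) :
  1_(id1 y) ⊗ lunit f = lunit (comp1 (id1 y) f).
Proof.
by rewrite -[LHS]vcomp1l -(lunit_inv_lunit f) -vcompA lunit_nat vcompA lunit_inv_lunit vcomp1l.
Qed.

Lemma runit_whisker (x y : ob C) (f : hom x y) :
  runit f ⊗ 1_(id1 x) = runit (comp1 f (id1 x)).
Proof.
by rewrite -[LHS]vcomp1l -(runit_inv_runit f) -vcompA runit_nat vcompA runit_inv_runit vcomp1l.
Qed.

Lemma lunit_id1 (y : ob C) : lunit (id1 y) = runit (id1 y).
Proof. by apply: whisker_id1r_inj; rewrite -lunit_comp1_assoc -whisker_lunit triangle. Qed.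

Lemma lunit_inv_id1 (y : ob C) : lunit_inv (id1 y) = runit_inv (id1 y).
Proof.
by rewrite -[LHS]vcomp1l -(runit_inv_runit (id1 y)) -lunit_id1 -vcompA lunit_lunit_inv vcomp1r.
Qed.

Lemma assoc_inv_lunit_inv (x y z : ob C) (g : hom y z) (f : hom x y) :
  assoc_inv (id1 z) g f • lunit_inv (comp1 g f) = lunit_inv g ⊗ 1_f.
Proof.
rewrite -[LHS]vcomp1l -hcomp11 -(lunit_inv_lunit g) -whiskerrM -lunit_comp1_assoc.
by rewrite -!vcompA (vcompA (assoc _ _ _)) assoc_assoc_inv vcomp1l lunit_lunit_inv vcomp1r.
Qed.

Lemma lunit_assoc_id1 (y : ob C) :
  lunit (comp1 (id1 y) (id1 y)) • assoc (id1 y) (id1 y) (id1 y)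
  = runit (comp1 (id1 y) (id1 y)).
Proof. by rewrite lunit_comp1_assoc lunit_id1 runit_whisker. Qed.

Lemma lunit_id1_nat (y : ob C) (f : hom y y) (a : cell f (id1 y)) :
  lunit (id1 y) • (a ⊗ 1_(id1 y)) = a • runit f.
Proof. by rewrite lunit_id1 runit_nat. Qed.

Definition act (x y : ob C) (h : hom x y) (c : End2 y) : cell h h :=
  lunit h • (c ⊗ 1_h) • lunit_inv h.

Lemma act_lunit (x y : ob C) (h : hom x y) (c : End2 y) :
  lunit h • (c ⊗ 1_h) = act h c • lunit h.
Proof. by rewrite /act -vcompA lunit_inv_lunit vcomp1r. Qed.

Lemma act_nat (x y : ob C) (h k : hom x y) (t : cell h k) (c : End2 y) :
  t • act h c = act k c • t.
Proof.
rewrite /act -!vcompA lunit_inv_nat (vcompA (c ⊗ 1_k)) -interchange vcomp1l vcomp1r.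
by rewrite (hcompEr c t) !vcompA lunit_nat.
Qed.

Lemma act_id1 (y : ob C) (c : End2 y) : act (id1 y) c = c.
Proof. by rewrite /act lunit_id1 lunit_inv_id1 runit_nat -vcompA runit_runit_inv vcomp1r. Qed.

Lemma act_whisker (x y z : ob C) (g : hom y z) (f : hom x y) (c : End2 z) :
  act g c ⊗ 1_f = act (comp1 g f) c.
Proof.
rewrite /act -!whiskerrM -lunit_comp1_assoc -assoc_inv_lunit_inv -!vcompA.
rewrite (vcompA (assoc _ _ _)) assoc_nat -!vcompA (vcompA (assoc _ _ _)) assoc_assoc_inv.
by rewrite hcomp11 vcomp1l.
Qed.

Lemma actM (x y : ob C) (h : hom x y) (c c' : End2 y) :
  act h (c • c') = act h c • act h c'.
Proof.
rewrite /act -!vcompA (vcompA (lunit_inv h)) lunit_inv_lunit vcomp1l.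
by rewrite (vcompA (c ⊗ 1_h)) whiskerrM.
Qed.

(* Eckmann-Hilton: on End(id_y), horizontal composition is vertical composition. *)
Lemma lunit_hcomp_id1 (y : ob C) (a b : End2 y) :
  lunit (id1 y) • (a ⊗ b) = a • b • lunit (id1 y).
Proof. by rewrite hcompEl vcompA act_lunit act_id1 -vcompA lunit_nat vcompA. Qed.

Section Retract.
Variables (x d : ob C) (f : hom x d) (g : hom d x).
Variables (phi : cell (comp1 f g) (id1 d)) (ga : cell (id1 d) (comp1 f g)).
Hypothesis phi_ga : phi • ga = 1_ _.

Lemma retract_whiskerlK (z : ob C) (k k' : hom z d) (u : cell k k') :
  lunit k' • (phi ⊗ 1_k') • assoc_inv f g k' • (1_f ⊗ (1_g ⊗ u)) • assoc f g k
   • (ga ⊗ 1_k) • lunit_inv k = u.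
Proof.
rewrite -!vcompA (vcompA (assoc_inv _ _ _)) assoc_inv_nat -!vcompA (vcompA (assoc_inv _ _ _)).
rewrite assoc_inv_assoc vcomp1l hcomp11 (vcompA (phi ⊗ _)) -hcompEl (hcompEr phi u) !vcompA.
rewrite lunit_nat -!vcompA (vcompA (phi ⊗ _)) whiskerrM phi_ga hcomp11 vcomp1l.
by rewrite lunit_lunit_inv vcomp1r.
Qed.

Lemma retract_whiskerl_inj (z : ob C) (k k' : hom z d) (u v : cell k k') :
  1_g ⊗ u = 1_g ⊗ v -> u = v.
Proof. by move=> H; rewrite -(retract_whiskerlK u) -(retract_whiskerlK v) H. Qed.

Lemma retract_whiskerrK (z : ob C) (h h' : hom d z) (u : cell h h') :
  runit h' • (1_h' ⊗ phi) • assoc h' f g • ((u ⊗ 1_f) ⊗ 1_g) • assoc_inv h f g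
   • (1_h ⊗ ga) • runit_inv h = u.
Proof.
rewrite -!vcompA (vcompA (assoc _ _ _)) assoc_nat -!vcompA (vcompA (assoc _ _ _)).
rewrite assoc_assoc_inv vcomp1l hcomp11 (vcompA (_ ⊗ phi)) -hcompEr (hcompEl u phi) !vcompA.
rewrite runit_nat -!vcompA (vcompA (_ ⊗ phi)) whiskerlM phi_ga hcomp11 vcomp1l.
by rewrite runit_runit_inv vcomp1r.
Qed.

Lemma retract_whiskerr_inj (z : ob C) (h h' : hom d z) (u v : cell h h') :
  u ⊗ 1_f = v ⊗ 1_f -> u = v.
Proof. by move=> H; rewrite -(retract_whiskerrK u) -(retract_whiskerrK v) H. Qed.

End Retract.

Section SplitIdempotent.
Variables (x : ob C) (E : hom x x) (r : cell (id1 x) E) (s : cell E (id1 x)).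
Hypothesis rs : r • s = 1_E.

Definition split_mu : cell (comp1 E E) E := r • lunit (id1 x) • (s ⊗ s).
Definition split_delta : cell E (comp1 E E) := (r ⊗ r) • lunit_inv (id1 x) • s.

Lemma retract_rsr : r • (s • r) = r.
Proof. by rewrite vcompA rs vcomp1l. Qed.

Lemma retract_srs : s • r • s = s.
Proof. by rewrite -vcompA rs vcomp1r. Qed.

Lemma act_retract (b : End2 x) : act E b = r • b • s.
Proof. by rewrite -[LHS]vcomp1l -rs -vcompA act_nat act_id1 vcompA. Qed.

Lemma split_mu_delta : split_mu • split_delta = 1_E.
Proof.
rewrite /split_mu /split_delta -!vcompA (vcompA (s ⊗ s)) -interchange (vcompA (lunit _)).
rewrite lunit_hcomp_id1 -!vcompA (vcompA (lunit _)) lunit_lunit_inv vcomp1l.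
by rewrite !vcompA rs vcomp1l rs vcomp1l rs.
Qed.

Lemma split_delta_mu : split_delta • split_mu = 1_(comp1 E E).
Proof.
rewrite /split_mu /split_delta -!vcompA (vcompA (lunit_inv _)) lunit_inv_nat -!vcompA.
rewrite (vcompA (lunit_inv _)) lunit_inv_nat -!vcompA (vcompA (lunit_inv _)) lunit_inv_lunit.
rewrite vcomp1l (vcompA (1_ _ ⊗ s)) whiskerlM (vcompA (_ ⊗ r)) -interchange.
by rewrite vcomp1r retract_rsr -interchange rs hcomp11.
Qed.

Lemma split_delta_bimodule :
  (split_mu ⊗ 1_E) • (assoc_inv E E E • (1_E ⊗ split_delta)) = 1_(comp1 E E).
Proof.
rewrite /split_mu /split_delta -!whiskerrM -!whiskerlM -!vcompA (vcompA (assoc_inv _ _ _)).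
rewrite assoc_inv_nat -!vcompA (vcompA (s ⊗ s ⊗ 1_E)) -(interchange _ (s ⊗ s)) vcomp1l.
rewrite -(interchange _ s) vcomp1r (vcompA (lunit _ ⊗ 1_E)) -interchange vcomp1l.
rewrite (hcompEr s (s • r)) (vcompA (lunit _) (1_ _ ⊗ _)) lunit_nat -vcompA lunit_id1_nat.
rewrite (vcompA (s • r)) retract_srs (vcompA (r ⊗ 1_E)) -interchange vcomp1l (vcompA r) rs.
rewrite vcomp1l (hcompEr _ r) -(vcompA (1_E ⊗ r)) (vcompA (runit E ⊗ _)) triangle_inv.
by rewrite !whiskerlM (vcompA (lunit _)) lunit_lunit_inv vcomp1l rs hcomp11.
Qed.

Lemma split_mu_assoc :
  split_mu • (split_mu ⊗ 1_E) = split_mu • ((1_E ⊗ split_mu) • assoc E E E).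
Proof.
pose w := r • lunit (id1 x) • runit (comp1 (id1 x) (id1 x)) • ((s ⊗ s) ⊗ s).
have -> : split_mu • (split_mu ⊗ 1_E) = w.
  rewrite /w /split_mu -!whiskerrM -!vcompA (vcompA (s ⊗ s)) -(interchange r s) vcomp1r.
  rewrite (vcompA ((s • r) ⊗ s)) -(interchange (lunit _) (s • r)) vcomp1r.
  rewrite -(interchange (s ⊗ s) (s • r • lunit _)) vcomp1r hcompEl (vcompA (lunit _)).
  rewrite lunit_id1_nat -!vcompA (vcompA (s ⊗ s)) -runit_nat -vcompA -hcompEl.
  by rewrite (vcompA r s) rs vcomp1l.
suff -> : split_mu • ((1_E ⊗ split_mu) • assoc E E E) = w by [].
rewrite /w /split_mu -!whiskerlM -!vcompA (vcompA (s ⊗ s)) -(interchange _ s) vcomp1r.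
rewrite (vcompA (s ⊗ _)) -(interchange _ s) vcomp1r (vcompA (s ⊗ _)) -(interchange _ s).
rewrite vcomp1r hcompEr -!vcompA (vcompA (lunit _)) lunit_nat -!vcompA (vcompA (s ⊗ s)).
rewrite -lunit_nat -!vcompA (vcompA (1_ _ ⊗ _)) -hcompEr -assoc_nat.
by rewrite (vcompA (lunit _) (assoc _ _ _)) lunit_assoc_id1 (vcompA r s) rs vcomp1l.
Qed.

Lemma split_mu_conj (b : End2 x) :
  split_mu • ((1_E ⊗ (r • b • s)) • split_delta) = r • b • s.
Proof.
rewrite /split_mu /split_delta -!vcompA (vcompA (s ⊗ s)) -interchange vcomp1r.
rewrite (vcompA (_ ⊗ _)) -interchange (vcompA (lunit _)) lunit_hcomp_id1 -!vcompA.
rewrite (vcompA (lunit _)) lunit_lunit_inv vcomp1l !vcompA rs vcomp1l rs vcomp1l.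
by rewrite -(vcompA _ r s) rs vcomp1r.
Qed.

Lemma split_idem2 : idem2 split_mu split_delta.
Proof.
have := split_mu_assoc; have := split_delta_bimodule.
have := split_delta_mu; have := split_mu_delta.
move: split_mu split_delta => mu de mu_de de_mu bimod mu_assoc.
split => //.
- have -> : assoc E E E • ((de ⊗ 1_E) • de)
          = (1_E ⊗ de) • de • (mu • ((1_E ⊗ mu) • assoc E E E)) • ((de ⊗ 1_E) • de).
    rewrite -!vcompA (vcompA de mu) de_mu vcomp1l (vcompA (1_E ⊗ de)) whiskerlM de_mu.
    by rewrite hcomp11 vcomp1l.
  rewrite -mu_assoc -!vcompA (vcompA (mu ⊗ _)) whiskerrM mu_de hcomp11 vcomp1l.
  by rewrite mu_de vcomp1r.
- by rewrite bimod de_mu.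
- rewrite de_mu; symmetry; rewrite -[LHS]vcomp1l -{1}bimod -!vcompA (vcompA (1_E ⊗ de)).
  rewrite whiskerlM de_mu hcomp11 vcomp1l (vcompA (assoc_inv _ _ _)) assoc_inv_assoc.
  by rewrite vcomp1l whiskerrM mu_de hcomp11.
Qed.

End SplitIdempotent.

(* The (co)multiplication that [splits] transports to g o f along phi and ga. *)
Definition splitting_mu (x d : ob C) (f : hom x d) (g : hom d x)
    (phi : cell (comp1 f g) (id1 d)) : cell (comp1 (comp1 g f) (comp1 g f)) (comp1 g f) :=
  (1_g ⊗ lunit f)
  • ((1_g ⊗ (phi ⊗ 1_f)) • ((1_g ⊗ assoc_inv f g f) • assoc g f (comp1 g f))).

Definition splitting_delta (x d : ob C) (f : hom x d) (g : hom d x)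
    (ga : cell (id1 d) (comp1 f g)) : cell (comp1 g f) (comp1 (comp1 g f) (comp1 g f)) :=
  assoc_inv g f (comp1 g f)
  • ((1_g ⊗ assoc f g f) • ((1_g ⊗ (ga ⊗ 1_f)) • (1_g ⊗ lunit_inv f))).

Lemma act_splitting (x d : ob C) (f : hom x d) (g : hom d x)
    (phi : cell (comp1 f g) (id1 d)) (ga : cell (id1 d) (comp1 f g)) (b : End2 x) :
  1_g ⊗ act f (phi • (1_f ⊗ act g b) • ga)
  = splitting_mu phi • ((1_(comp1 g f) ⊗ act (comp1 g f) b) • splitting_delta ga).
Proof.
rewrite /splitting_mu /splitting_delta -act_whisker -(hcomp11 g f) -!vcompA.
rewrite (vcompA (assoc g f _)) assoc_nat -!vcompA (vcompA (assoc g f _)) assoc_assoc_inv.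
rewrite vcomp1l !whiskerlMA whiskerlM; congr (1_g ⊗ _).
rewrite -(vcompA _ (assoc_inv f g f)) assoc_inv_nat /act -!whiskerrM -!vcompA.
by rewrite (vcompA (assoc_inv _ _ _)) assoc_inv_assoc vcomp1l.
Qed.

(* A splitting id_x -r-> E -s-> id_x of p in Hom(x, x), together with a splitting,
   in the sense of [splits], of the 2-categorical idempotent on E built from r, s. *)
Record summand (x : ob C) (p : End2 x) := Summand {
  sm_E : hom x x; sm_r : cell (id1 x) sm_E; sm_s : cell sm_E (id1 x);
  sm_ob : ob C; sm_f : hom x sm_ob; sm_g : hom sm_ob x;
  sm_phi : cell (comp1 sm_f sm_g) (id1 sm_ob); sm_ga : cell (id1 sm_ob) (comp1 sm_f sm_g);
  sm_th : cell (comp1 sm_g sm_f) sm_E; sm_thi : cell sm_E (comp1 sm_g sm_f);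
  sm_rs : sm_r • sm_s = 1_sm_E;
  sm_sr : sm_s • sm_r = p;
  sm_phi_ga : sm_phi • sm_ga = 1_(id1 sm_ob);
  sm_thi_th : sm_thi • sm_th = 1_(comp1 sm_g sm_f);
  sm_th_thi : sm_th • sm_thi = 1_sm_E;
  sm_mu : sm_th • splitting_mu sm_phi = split_mu sm_r sm_s • (sm_th ⊗ sm_th);
  sm_delta : split_delta sm_r sm_s • sm_th = (sm_th ⊗ sm_th) • splitting_delta sm_ga }.

Lemma summand_exists (Hidem : idem_complete C) (x : ob C) (p : End2 x) :
  p • p = p -> exists P : summand p, True.
Proof.
case: Hidem => [split_cell split_idem] pp.
have [E [r [s [rs sr]]]] := split_cell _ _ (id1 x) p pp.
have [d [f [g [phi [ga [th [thi []]]]]]]] := split_idem _ _ _ _ (split_idem2 rs).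
by move=> phi_ga thi_th th_thi Smu Sdelta; exists (Summand rs sr phi_ga thi_th th_thi Smu Sdelta).
Qed.

Section Summand.
Variables (x : ob C) (p : End2 x) (P : summand p).
Local Notation r := (sm_r P).
Local Notation s := (sm_s P).
Local Notation f := (sm_f P).
Local Notation g := (sm_g P).
Local Notation phi := (sm_phi P).
Local Notation ga := (sm_ga P).
Local Notation th := (sm_th P).
Local Notation thi := (sm_thi P).

Lemma splitting_muE : splitting_mu phi = thi • split_mu r s • (th ⊗ th).
Proof. by rewrite -vcompA -sm_mu vcompA sm_thi_th vcomp1l. Qed.

Lemma splitting_deltaE : splitting_delta ga = (thi ⊗ thi) • split_delta r s • th.
Proof. by rewrite -vcompA sm_delta vcompA -interchange sm_thi_th hcomp11 vcomp1l. Qed.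

Lemma splitting_delta_mu : splitting_delta ga • splitting_mu phi = 1_ _.
Proof.
rewrite splitting_muE splitting_deltaE.
move: (split_delta_mu (sm_rs P)); move: (split_delta r s) (split_mu r s) => de mu de_mu.
rewrite -!vcompA (vcompA th thi) sm_th_thi vcomp1l (vcompA de) de_mu vcomp1l.
by rewrite -interchange sm_thi_th hcomp11.
Qed.

Lemma summand_ga_phi : ga • phi = 1_(comp1 f g).
Proof.
have H := splitting_delta_mu.
rewrite /splitting_delta /splitting_mu -!vcompA !whiskerlMA in H.
rewrite -!vcompA (vcompA (lunit_inv f)) lunit_inv_lunit vcomp1l whiskerrMA in H.
have HZ : 1_g ⊗ (assoc f g f • (((ga • phi) ⊗ 1_f) • assoc_inv f g f))
        = 1_g ⊗ (assoc f g f • ((1_ (comp1 f g) ⊗ 1_f) • assoc_inv f g f)).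
  rewrite hcomp11 vcomp1l assoc_assoc_inv hcomp11.
  rewrite -[LHS]vcomp1l -(assoc_assoc_inv g f (comp1 g f)) -[LHS]vcomp1r.
  rewrite -(assoc_assoc_inv g f (comp1 g f)) -!vcompA (vcompA (1_g ⊗ _)).
  by rewrite (vcompA (assoc_inv _ _ _)) H vcomp1l.
move/(retract_whiskerl_inj (sm_phi_ga P)): HZ => HZ.
apply: (retract_whiskerr_inj (sm_phi_ga P)).
apply: (retract_conj_inj (assoc_inv_assoc f g f)).
by rewrite -vcompA HZ -vcompA.
Qed.

Definition summand_embed (a : End2 (sm_ob P)) : End2 x :=
  s • th • (1_g ⊗ act f a) • thi • r.

Lemma summand_embedD (a b : End2 (sm_ob P)) :
  summand_embed (a + b) = summand_embed a + summand_embed b.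
Proof. by rewrite /summand_embed /act hcompDl !(vcompDr, vcompDl, hcompDr). Qed.

Lemma summand_embedM (a b : End2 (sm_ob P)) :
  summand_embed (a • b) = summand_embed a • summand_embed b.
Proof.
rewrite /summand_embed actM -whiskerlM -!vcompA (vcompA r s) sm_rs vcomp1l.
by rewrite (vcompA thi th) sm_thi_th vcomp1l !vcompA.
Qed.

Lemma summand_embed_inj : injective summand_embed.
Proof.
move=> a a' H.
have whisker_act c : 1_g ⊗ act f c = thi • (r • summand_embed c • s) • th.
  rewrite /summand_embed !vcompA -(vcompA thi r s) sm_rs vcomp1r sm_thi_th vcomp1l.
  by rewrite -(vcompA _ r s) sm_rs vcomp1r -vcompA sm_thi_th vcomp1r.
have {H}/(retract_whiskerl_inj (sm_phi_ga P)) : 1_g ⊗ act f a = 1_g ⊗ act f a'.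
  by rewrite !whisker_act H.
have E1 c : c = phi • (act f c ⊗ 1_g) • ga.
  by rewrite act_whisker act_nat act_id1 -vcompA sm_phi_ga vcomp1r.
by move=> Haa'; rewrite (E1 a) Haa' -E1.
Qed.

Lemma summand_embed_idem (a : End2 (sm_ob P)) : p • summand_embed a = summand_embed a.
Proof. by rewrite -(sm_sr P) /summand_embed !vcompA -(vcompA s r s) sm_rs vcomp1r. Qed.

Lemma summand_embed_corner (b : End2 x) :
  summand_embed (phi • (1_f ⊗ act g b) • ga) = p • b • p.
Proof.
have -> : p • b • p = s • (r • b • s) • r by rewrite -!vcompA sm_sr (vcompA s r) sm_sr.
rewrite /summand_embed act_splitting splitting_muE splitting_deltaE.
move: (split_mu_conj (sm_rs P) b); move: (split_delta r s) (split_mu r s) => de mu mu_conj.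
rewrite -!vcompA (vcompA th thi) sm_th_thi vcomp1l (vcompA th thi) sm_th_thi vcomp1l.
rewrite (vcompA (th ⊗ th)) -interchange vcomp1r (vcompA (th ⊗ _)) -interchange sm_th_thi.
rewrite act_nat -vcompA sm_th_thi vcomp1r (act_retract (sm_rs P)) (vcompA _ de).
by rewrite (vcompA mu) mu_conj !vcompA.
Qed.

End Summand.

Lemma retract_zero (x y : ob C) (f g : hom x y) (u : cell f g) (v : cell g f) :
  v • u = 1_f -> 1_g = 0 -> 1_f = 0.
Proof. by move=> vu g0; rewrite -vu -[u]vcomp1l g0 vcomp0l vcomp0r. Qed.

Lemma iso2_refl (x y : ob C) (f : hom x y) : iso2 f f.
Proof. by exists (1_f), (1_f); rewrite vcomp1l. Qed.

Lemma equiv_ob_refl (x : ob C) : equiv_ob x x.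
Proof.
have lunit_iso : iso2 (comp1 (id1 x) (id1 x)) (id1 x).
  by exists (lunit _), (lunit_inv _); rewrite lunit_inv_lunit lunit_lunit_inv.
by exists (id1 x), (id1 x).
Qed.

Section Orthogonal.
Variables (x : ob C) (p q : End2 x) (P : summand p) (Q : summand q).
Hypothesis pq : p • q = 0.

Lemma summand_retract_orth : sm_r P • sm_s Q = 0.
Proof.
have -> : sm_r P • sm_s Q = sm_r P • ((sm_s P • sm_r P) • (sm_s Q • sm_r Q)) • sm_s Q.
  by rewrite !vcompA sm_rs vcomp1l -(vcompA _ (sm_r Q)) sm_rs vcomp1r.
by rewrite !sm_sr pq vcomp0r vcomp0l.
Qed.

Lemma summand_cross_zero : 1_(comp1 (sm_f P) (sm_g Q)) = 0.
Proof.
apply: (retract_whiskerr_inj (sm_phi_ga Q)); rewrite hcomp0l.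
apply: (retract_whiskerl_inj (sm_phi_ga P)); rewrite hcomp0r !hcomp11.
pose GF := comp1 (sm_g Q) (sm_f Q).
apply: (@retract_zero _ _ _ _
  (assoc_inv (sm_g P) (sm_f P) GF • (1_(sm_g P) ⊗ assoc (sm_f P) (sm_g Q) (sm_f Q)))
  ((1_(sm_g P) ⊗ assoc_inv (sm_f P) (sm_g Q) (sm_f Q)) • assoc (sm_g P) (sm_f P) GF)).
  rewrite -vcompA (vcompA (assoc _ _ _)) assoc_assoc_inv vcomp1l whiskerlM.
  by rewrite assoc_inv_assoc hcomp11.
apply: (@retract_zero _ _ _ _ (sm_th P ⊗ sm_th Q) (sm_thi P ⊗ sm_thi Q)).
  by rewrite -interchange !sm_thi_th hcomp11.
have pq0 : p ⊗ q = 0.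
  by rewrite -[LHS]vcomp1l -(lunit_inv_lunit (id1 x)) -vcompA lunit_hcomp_id1 pq vcomp0l vcomp0r.
rewrite -hcomp11 -(sm_rs P) -(sm_rs Q) -{1}(retract_rsr (sm_rs P)) -{1}(retract_rsr (sm_rs Q)).
by rewrite !interchange -interchange !sm_sr pq0 vcomp0r vcomp0l.
Qed.

End Orthogonal.

Lemma summands_direct_sum (x : ob C) (I : finType) (e : I -> End2 x)
    (P : forall i, summand (e i)) :
  \sum_(i : I) e i = 1_(id1 x) -> (forall i j, i != j -> e i • e j = 0) ->
  is_direct_sum (fun i => sm_ob (P i)) x.
Proof.
move=> sum_e orth.
exists (fun i => sm_g (P i)), (fun i => sm_f (P i)); split.
- move=> j; exists (sm_phi (P j)), (sm_ga (P j)).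
  by split; [exact: summand_ga_phi | exact: sm_phi_ga].
- move=> j k njk; exists (comp1 (sm_f (P j)) (sm_g (P k))); split; last exact: iso2_refl.
  exact: summand_cross_zero (orth _ _ njk).
exists (id1 x); split; last exact: iso2_refl.
exists (fun i => sm_s (P i) • sm_th (P i)), (fun i => sm_thi (P i) • sm_r (P i)); split.
- by move=> i; rewrite vcompA -(vcompA _ (sm_r _)) sm_rs vcomp1r sm_thi_th.
- move=> i j nij; rewrite vcompA -(vcompA _ (sm_r _)).
  by rewrite (summand_retract_orth _ _ (orth _ _ nij)) vcomp0r vcomp0l.
rewrite -sum_e; apply: eq_bigr => i _.
by rewrite vcompA -(vcompA _ (sm_th _)) sm_th_thi vcomp1r sm_sr.
Qed.

Lemma summand_ring_iso (x : ob C) (p : End2 x) (P : summand p) (B : End2 x -> Prop) :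
  (forall c, B (p • c)) -> (forall b, B b -> p • b • p = b) ->
  exists phi : End2 (sm_ob P) -> End2 x, ring_iso_onto phi B.
Proof.
move=> Bp pbp; exists (summand_embed (P := P)); split.
- exact: summand_embedD.
- exact: summand_embedM.
- exact: summand_embed_inj.
- by move=> a; rewrite -summand_embed_idem; apply: Bp.
move=> b /pbp <-.
by exists (sm_phi P • (1_(sm_f P) ⊗ act (sm_g P) b) • sm_ga P); apply: summand_embed_corner.
Qed.

Lemma ring_decomp_idempotents (x : ob C) (I : finType) (A : I -> End2 x -> Prop) :
  ring_decomp A ->
  exists e : I -> End2 x,
    [/\ \sum_(i : I) e i = 1_(id1 x),
        forall i j, e i • e j = if i == j then e i else 0,
        forall i c, A i (e i • c) &
        forall i b, A i b -> e i • b • e i = b].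
Proof.
case=> A0 _ A_ideal A_span A_uniq.
have [e [Ae sum_e]] := A_span (1_(id1 x)).
have e_unit i b (Ab : A i b) :
    (forall j, b • e j = if j == i then b else 0) /\
    (forall j, e j • b = if j == i then b else 0).
  have [Abe Aeb] : (forall j, A j (b • e j)) /\ (forall j, A j (e j • b)).
    by split=> j; case: (A_ideal j b (e j) (Ae j)).
  have A_delta j : A j (if j == i then b else 0) by case: eqP => [->|].
  have sum_delta : \sum_(j : I) (if j == i then b else 0) = b.
    by rewrite (bigD1 i) //= eqxx big1 ?addr0 // => j /negbTE ->.
  split; [apply: (A_uniq _ _ Abe A_delta) | apply: (A_uniq _ _ Aeb A_delta)]; rewrite sum_delta.
  - by rewrite -(big_morph (vcomp b) (vcompDr b) (vcomp0r _ b)) -sum_e vcomp1r.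
  - by rewrite -(big_morph (vcomp^~ b) (fun a1 a2 => vcompDl a1 a2 b) (vcomp0l _ b)) -sum_e vcomp1l.
exists e; split=> //.
- by move=> i j; have [-> _] := e_unit i _ (Ae i); rewrite eq_sym.
- by move=> i c; case: (A_ideal i c (e i) (Ae i)).
by move=> i b Ab; have [be eb] := e_unit i b Ab; rewrite eb eqxx be eqxx.
Qed.

End Bicategory.

Theorem proposition2p16 (C : bicat) (HC : bicat_axioms C) (Hadd : locally_additive C)
    (Hidem : idem_complete C) (x : ob C) (I : finType) (A : I -> End2 x -> Prop) :
  ring_decomp A ->
  exists (xs : I -> ob C) (X : ob C),
    [/\ is_direct_sum xs X, equiv_ob x X &
        forall i, exists phi : End2 (xs i) -> End2 x, ring_iso_onto phi (A i)].
Proof.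
move=> HA; have [e [sum_e e_orth Ae e_corner]] := ring_decomp_idempotents HC Hadd HA.
have e_idem i : e i • e i = e i by rewrite e_orth eqxx.
have /fin_all_exists [P _] i : exists _ : summand (e i), True :=
  summand_exists HC Hidem (e_idem i).
exists (fun i => sm_ob (P i)), x; split.
- by apply: (summands_direct_sum HC Hadd P sum_e) => i j /negbTE nij; rewrite e_orth nij.
- exact: equiv_ob_refl.
move=> i; exact: (summand_ring_iso HC Hadd (P i) (Ae i) (e_corner i)).
Qed.
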